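(* Let $H$ be a real Hilbert space and consider the problem $$\text{minimize } J(x):=a_J\|x\|^2+2\langle b_J,x\rangle+c_J\quad\text{subject to}\quad f_k(x):=a_k\|x\|^2+2\langle b_k,x\rangle+c_k\le 0,\ k=1,\dots,m,$$ with $a_J,a_k,c_J,c_k\in\mathbb{R}$ and $b_J,b_k\in H$. Let $x^*$ be a global minimizer of this problem, set $a_0:=a_J$, $b_0:=b_J$, $c_0:=c_J-J(x^* )$, so that $f_0(x):=J(x)-J(x^* )=a_0\|x\|^2+2\langle b_0,x\rangle+c_0$, and define $$\Omega_0:=\{(f_0(x),f_1(x),\dots,f_m(x))\mid x\in H\}+\operatorname{int}\mathbb{R}^{m+1}_+ .$$ Suppose that one of the following holds: (1) $H$ is infinite dimensional; (2) $H$ has finite dimension $n\in\mathbb{N}$ and every maximal linearly independent subset of $\{b_0,b_1,\dots,b_m\}$ has cardinality $\bar m<n$. Then $\Omega_0$ is convex.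
   Context: $\|\cdot\|$ is the norm induced by the inner product of $H$. $\operatorname{int}\mathbb{R}^{m+1}_+$ is the set of vectors in $\mathbb{R}^{m+1}$ with strictly positive components and $+$ is the Minkowski sum. *)

From mathcomp Require Import all_boot all_order all_algebra.
From mathcomp Require Import reals.
Set Implicit Arguments. Unset Strict Implicit. Unset Printing Implicit Defensive.
Import Order.TTheory GRing.Theory Num.Theory.
Local Open Scope ring_scope.

Section Defs.
Variable R : realType.
Variable V : lmodType R.

Definition is_hilbert_inner (ip : V -> V -> R) : Prop :=
  [/\ (forall x y, ip x y = ip y x),
      (forall a x y z, ip (a *: x + y) z = a * ip x z + ip y z),
      (forall x, 0 <= ip x x),
      (forall x, ip x x = 0 -> x = 0) &
      (forall u : nat -> V,
         (forall e : R, 0 < e -> exists N : nat, forall p q : nat,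
            (N <= p)%N -> (N <= q)%N -> Num.sqrt (ip (u p - u q) (u p - u q)) < e) ->
         exists l : V, forall e : R, 0 < e -> exists N : nat, forall p : nat,
            (N <= p)%N -> Num.sqrt (ip (u p - l) (u p - l)) < e)].

Definition lin_indep_on (I : finType) (v : I -> V) (S : {set I}) : Prop :=
  forall c : I -> R, \sum_(i in S) c i *: v i = 0 -> forall i, i \in S -> c i = 0.

Definition lin_indep (I : finType) (v : I -> V) : Prop := lin_indep_on v setT.

Definition spans (I : finType) (v : I -> V) : Prop :=
  forall x : V, exists c : I -> R, x = \sum_i c i *: v i.

Definition has_dim (n : nat) : Prop :=
  exists v : 'I_n -> V, lin_indep v /\ spans v.

Definition infinite_dim : Prop :=
  forall n : nat, exists v : 'I_n -> V, lin_indep v.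

Definition max_lin_indep (I : finType) (v : I -> V) (S : {set I}) : Prop :=
  lin_indep_on v S /\ (forall j, j \notin S -> ~ lin_indep_on v (j |: S)).

Definition quadf (ip : V -> V -> R) (a : R) (b : V) (c : R) (x : V) : R :=
  a * ip x x + 2 * ip b x + c.

(* index 0 of 'I_m.+1 gets the "J"-data, index k.+1 gets the k-th constraint *)
Definition ext0 (T : Type) (m : nat) (t0 : T) (t : 'I_m -> T) (i : 'I_m.+1) : T :=
  match unlift ord0 i with None => t0 | Some k => t k end.

Definition convex_rV (m : nat) (A : 'rV[R]_m -> Prop) : Prop :=
  forall y z : 'rV[R]_m, A y -> A z -> forall t : R, 0 <= t -> t <= 1 ->
    A (t *: y + (1 - t) *: z).

End Defs.

From mathcomp Require Import all_boot all_order all_algebra.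
From mathcomp Require Import reals boolp.
From mathcomp Require Import ring lra.
Set Implicit Arguments. Unset Strict Implicit.
Import Order.TTheory GRing.Theory Num.Theory.
Local Open Scope ring_scope.

(* If some z <> 0 is orthogonal to every b_k, moving along z changes ||x||^2
   but none of the linear parts <b_k, x>.  For x_t = t x1 + (1 - t) x2 the
   linear parts are already the convex combination, while ||x_t||^2 falls short
   of t ||x1||^2 + (1 - t) ||x2||^2 by t (1 - t) ||x1 - x2||^2 >= 0; a suitable
   shift x_t + s z closes this gap.  Hence the image of
   x |-> (f_0(x), ..., f_m(x)) is already convex, and so is its sum with the
   open orthant.  Such a z exists because the b_k span a subspace of dimension
   smaller than that of H. *)

Section InnerProduct.
Variables (R : rcfType) (V : lmodType R) (ip : V -> V -> R).
Hypothesis ipC : forall x y, ip x y = ip y x.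
Hypothesis ip_linear : forall a x y z, ip (a *: x + y) z = a * ip x z + ip y z.

Lemma ip0l z : ip 0 z = 0.
Proof.
move: (ip_linear 1 0 0 z); rewrite scaler0 addr0 mul1r -{1}[ip 0 z]addr0.
by move/addrI.
Qed.

Lemma ipDl x y z : ip (x + y) z = ip x z + ip y z.
Proof. by have := ip_linear 1 x y z; rewrite scale1r mul1r. Qed.

Lemma ipZl a x z : ip (a *: x) z = a * ip x z.
Proof. by have := ip_linear a x 0 z; rewrite addr0 ip0l addr0. Qed.

Lemma ipNl x z : ip (- x) z = - ip x z.
Proof. by rewrite -scaleN1r ipZl mulN1r. Qed.

Lemma ipDr x y z : ip z (x + y) = ip z x + ip z y.
Proof. by rewrite ipC ipDl !(ipC z). Qed.

Lemma ipZr a x z : ip z (a *: x) = a * ip z x.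
Proof. by rewrite ipC ipZl (ipC z). Qed.

Lemma ipNr x z : ip z (- x) = - ip z x.
Proof. by rewrite ipC ipNl (ipC z). Qed.

Lemma ip_suml (I : finType) (P : pred I) (c : I -> R) (v : I -> V) w :
  ip (\sum_(i | P i) c i *: v i) w = \sum_(i | P i) c i * ip (v i) w.
Proof.
apply: (big_rec2 (fun X Y => ip X w = Y)); first exact: ip0l.
by move=> i X Y _ <-; rewrite ipDl ipZl.
Qed.

Lemma sqnorm_convex_gap x1 x2 t :
  t * ip x1 x1 + (1 - t) * ip x2 x2
    - ip (t *: x1 + (1 - t) *: x2) (t *: x1 + (1 - t) *: x2)
  = t * (1 - t) * ip (x1 - x2) (x1 - x2).
Proof. by rewrite !(ipDl, ipDr, ipZl, ipZr, ipNl, ipNr) (ipC x2 x1); ring. Qed.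

Lemma exists_sqnorm_shift x z d : 0 < ip z z -> 0 <= d ->
  exists s, ip (x + s *: z) (x + s *: z) = ip x x + d.
Proof.
move=> z_pos d_ge0; set N := ip z z; set p := ip x z.
set r := Num.sqrt (p ^+ 2 + N * d).
have r2 : r ^+ 2 = p ^+ 2 + N * d.
  by rewrite sqr_sqrtr // addr_ge0 ?sqr_ge0 // mulr_ge0 // ltW.
set s := (r - p) / N.
have sN : s * N = r - p by rewrite divfK ?lt0r_neq0.
have s_root : s * (s * N) + 2 * s * p = d.
  apply: (mulIf (lt0r_neq0 z_pos)); rewrite /= -/N.
  transitivity (s * N * (s * N + 2 * p)); first by ring.
  rewrite sN; transitivity (r ^+ 2 - p ^+ 2); first by ring.
  by rewrite r2; ring.
exists s; rewrite ipDl !ipDr !ipZl !ipZr (ipC z x) -/N -/p -s_root; ring.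
Qed.

Hypothesis ip_ge0 : forall x, 0 <= ip x x.

Lemma exists_convex_lift x1 x2 z t : 0 < ip z z -> 0 <= t -> t <= 1 ->
  exists x, ip x x = t * ip x1 x1 + (1 - t) * ip x2 x2 /\
    forall w, ip w z = 0 -> ip w x = t * ip w x1 + (1 - t) * ip w x2.
Proof.
move=> z_pos t_ge0 t_le1; set xt := t *: x1 + (1 - t) *: x2.
have gap_ge0 : 0 <= t * ip x1 x1 + (1 - t) * ip x2 x2 - ip xt xt.
  by rewrite sqnorm_convex_gap !mulr_ge0 // subr_ge0.
have [s xs_norm] := exists_sqnorm_shift xt z_pos gap_ge0.
exists (xt + s *: z); split; first by rewrite xs_norm addrC subrK.
by move=> w wz; rewrite ipDr ipZr wz mulr0 addr0 ipDr !ipZr.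
Qed.

End InnerProduct.

Section Orthogonal.
Variables (R : realType) (V : lmodType R) (ip : V -> V -> R).
Hypothesis ipC : forall x y, ip x y = ip y x.
Hypothesis ip_linear : forall a x y z, ip (a *: x + y) z = a * ip x z + ip y z.

Lemma exists_max_lin_indep (I : finType) (v : I -> V) :
  exists S, max_lin_indep v S.
Proof.
pose P n := `[< exists S : {set I}, lin_indep_on v S /\ #|S| = n >].
have P0 : exists n, P n.
  exists 0%N; apply/asboolP; exists set0; rewrite cards0; split=> //.
  by move=> c _ i; rewrite in_set0.
have P_le n : P n -> (n <= #|I|)%N by move=> /asboolP[S [_ <-]]; apply: max_card.
case: (ex_maxnP P0 P_le) => n /asboolP[S [S_indep <-]] S_max.
exists S; split=> // j jS jS_indep.
have : P #|j |: S| by apply/asboolP; exists (j |: S).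
by move/S_max; rewrite cardsU1 jS add1n ltnn.
Qed.

Lemma exists_orthogonal_of_lt k l (u : 'I_k -> V) (w : 'I_l -> V) :
  (l < k)%N -> lin_indep u -> exists2 z, z != 0 & forall j, ip (w j) z = 0.
Proof.
move=> lk u_indep; pose M : 'M[R]_(k, l) := \matrix_(i, j) ip (u i) (w j).
have : kermx M != 0.
  rewrite -mxrank_eq0 mxrank_ker subn_eq0 -ltnNge.
  exact: leq_ltn_trans (rank_leq_col M) lk.
case/rowV0Pn => y /sub_kermxP yM y_neq0.
exists (\sum_(i in [set: 'I_k]) y 0 i *: u i).
  apply: contraNneq y_neq0 => y_sum0; apply/eqP/rowP => i.
  by rewrite mxE (u_indep _ y_sum0) ?in_setT.
move=> j; rewrite ipC (ip_suml ip_linear).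
have := congr1 (fun A : 'rV[R]_l => A 0 j) yM; rewrite !mxE => yMj.
by apply: etrans yMj; apply: eq_big => [i|i _]; rewrite ?in_setT ?mxE.
Qed.

Lemma orthogonal_max_lin_indep (I : finType) (v : I -> V) S z :
  max_lin_indep v S -> {in S, forall s, ip (v s) z = 0} ->
  forall i, ip (v i) z = 0.
Proof.
move=> [S_indep S_max] zS i; have [/zS //|iS] := boolP (i \in S).
have [c c_sum [k kiS ck]] : exists2 c : I -> R,
    \sum_(k in i |: S) c k *: v k = 0 & exists2 k, k \in i |: S & c k != 0.
  apply: contra_notP (S_max i iS) => no_c c c_sum k kiS.
  by apply: contra_notP no_c => /eqP ck; exists c => //; exists k.
have := congr1 (ip^~ z) c_sum.
rewrite (ip_suml ip_linear) (ip0l ip_linear) !big_setU1 //=.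
rewrite big1 ?addr0 => [|s sS]; last by rewrite zS ?mulr0.
move/eqP; rewrite mulf_eq0 => /orP[/eqP ci0|/eqP //]; exfalso.
rewrite big_setU1 //= ci0 scale0r add0r in c_sum.
move: kiS ck; rewrite in_setU1 => /orP[/eqP->|kS]; first by rewrite ci0 eqxx.
by rewrite (S_indep c c_sum) ?eqxx.
Qed.

Lemma exists_orthogonal_max_lin_indep k (u : 'I_k -> V) (I : finType)
    (v : I -> V) S :
  lin_indep u -> max_lin_indep v S -> (#|S| < k)%N ->
  exists2 z, z != 0 & forall i, ip (v i) z = 0.
Proof.
move=> u_indep vS Sk.
have [z z_neq0 z_orth] :=
  exists_orthogonal_of_lt (fun j : 'I_#|S| => v (enum_val j)) Sk u_indep.
exists z => //; apply: orthogonal_max_lin_indep vS _ => s sS.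
by have := z_orth (enum_rank_in sS s); rewrite /= enum_rankK_in.
Qed.

Lemma exists_orthogonal_of_dim (I : finType) (v : I -> V) :
  infinite_dim V \/
    (exists n, has_dim V n /\
       forall S, max_lin_indep v S -> (#|S| < n)%N) ->
  exists2 z, z != 0 & forall i, ip (v i) z = 0.
Proof.
have [S vS] := exists_max_lin_indep v.
case=> [V_inf | [n [[u [u_indep _]] small_rank]]].
  have [u u_indep] := V_inf #|I|.+1.
  by apply: exists_orthogonal_max_lin_indep u_indep vS _; rewrite ltnS max_card.
exact: exists_orthogonal_max_lin_indep u_indep vS (small_rank S vS).
Qed.

Hypothesis ip_ge0 : forall x, 0 <= ip x x.

Lemma exists_quadf_convex_comb x1 x2 z t : 0 < ip z z -> 0 <= t -> t <= 1 ->
  exists x, forall a b c, ip b z = 0 ->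
    quadf ip a b c x = t * quadf ip a b c x1 + (1 - t) * quadf ip a b c x2.
Proof.
move=> z_pos t_ge0 t_le1.
have [x [x_norm x_lin]] :=
  exists_convex_lift ipC ip_linear ip_ge0 x1 x2 z_pos t_ge0 t_le1.
by exists x => a b c bz; rewrite /quadf x_norm x_lin //; ring.
Qed.

Lemma convex_range_add_pos (T : Type) n (F : T -> 'rV[R]_n) :
  (forall x1 x2 t, 0 <= t -> t <= 1 ->
     exists x, F x = t *: F x1 + (1 - t) *: F x2) ->
  convex_rV (fun y => exists x, exists d : 'rV[R]_n,
                        (forall i, 0 < d 0 i) /\ y = F x + d).
Proof.
move=> F_convex _ _ [x1 [d1 [d1_pos ->]]] [x2 [d2 [d2_pos ->]]] t t_ge0 t_le1.
have [x Fx] := F_convex x1 x2 t t_ge0 t_le1.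
exists x, (t *: d1 + (1 - t) *: d2); split.
  by move=> i; rewrite !mxE; have := d1_pos i; have := d2_pos i; nra.
by rewrite Fx; apply/rowP => i; rewrite !mxE; ring.
Qed.

End Orthogonal.

(* Constraints f_1..f_m are indexed by k : 'I_m (k stands for k+1). *)
Theorem theorem4p1 (R : realType) (V : lmodType R) (ip : V -> V -> R)
  (m : nat) (aJ : R) (bJ : V) (cJ : R)
  (a : 'I_m -> R) (b : 'I_m -> V) (c : 'I_m -> R) (xs : V) :
  is_hilbert_inner ip ->
  (forall k, quadf ip (a k) (b k) (c k) xs <= 0) ->
  (forall x, (forall k, quadf ip (a k) (b k) (c k) x <= 0) ->
     quadf ip aJ bJ cJ xs <= quadf ip aJ bJ cJ x) ->
  let a0 := aJ in let b0 := bJ in let c0 := cJ - quadf ip aJ bJ cJ xs in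
  let bfam := ext0 b0 b in
  let F := fun x : V => \row_(i < m.+1)
             quadf ip (ext0 a0 a i) (ext0 b0 b i) (ext0 c0 c i) x in
  let Omega0 := fun y : 'rV[R]_m.+1 =>
      exists x : V, exists d : 'rV[R]_m.+1, (forall i, 0 < d 0 i) /\ y = F x + d in
  (infinite_dim V \/
   exists n : nat, has_dim V n /\
     (forall S : {set 'I_m.+1}, max_lin_indep bfam S -> (#|S| < n)%N)) ->
  convex_rV Omega0.
Proof.
move=> [ipC ip_linear ip_ge0 ip_eq0 _] _ _ a0 b0 c0 bfam F Omega0 dim_cond.
have [z z_neq0 z_orth] := exists_orthogonal_of_dim ipC ip_linear dim_cond.
have z_pos : 0 < ip z z.
  by rewrite lt0r ip_ge0 andbT; apply: contra z_neq0 => /eqP/ip_eq0 ->.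
apply: convex_range_add_pos => x1 x2 t t_ge0 t_le1.
have [x Fx] :=
  exists_quadf_convex_comb ipC ip_linear ip_ge0 x1 x2 z_pos t_ge0 t_le1.
by exists x; apply/rowP => i; rewrite !mxE Fx ?z_orth.
Qed.
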